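(* Let $k\in\mathbb{N}$, $k>1$, $z\in\mathbb{Z}$ and $l,t\in\mathbb{Z}[1/k]$. Then the following are equivalent: (1) $l\cdot z=t$; (2) for every $n\in\mathbb{Z}$, $l\cdot(k^{nz}-1)\equiv t\cdot(k^n-1)\pmod{(k^n-1)^2}$ in the ring $\mathbb{Z}[1/k]$.
   Context: $\mathbb{Z}[1/k]=\{zk^i: z,i\in\mathbb{Z}\}\subseteq\mathbb{Q}$. *)

(* Z[1/k] is realised as a subset of rat. *)
From mathcomp Require Import all_boot all_order all_algebra.
Set Implicit Arguments. Unset Strict Implicit. Unset Printing Implicit Defensive.
Import Order.TTheory GRing.Theory Num.Theory.
Local Open Scope ring_scope.

Definition in_Zk (k : nat) (x : rat) : Prop :=
  exists (a i : int), x = a%:~R * (k%:R : rat) ^ i.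

Definition congr_Zk (k : nat) (a b m : rat) : Prop :=
  exists c : rat, in_Zk k c /\ a - b = m * c.

From mathcomp Require Import all_boot all_order all_algebra.
From mathcomp Require Import ring zify.
Set Implicit Arguments.
Unset Strict Implicit.
Unset Printing Implicit Defensive.
Import Order.TTheory GRing.Theory Num.Theory.
Local Open Scope ring_scope.

(* For q = k^n, a unit of Z[1/k], the expansion
   q^z - 1 = z (q - 1) + (q - 1)^2 P  with P in Z[1/k]
   gives (1) => (2) at once.  Conversely, comparing this expansion with (2)
   for q = k^N, N > 0, shows that k^N - 1 divides l z - t in Z[1/k]; as
   k^N - 1 is coprime to k, it then divides the integer numerator of l z - t,
   and since k^N - 1 is unbounded that numerator vanishes. *)

Lemma subrX1_sub_linear (R : comPzRingType) (q : R) (m : nat) :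
  q ^+ m - 1 - m%:R * (q - 1) = (q - 1) ^+ 2 * \sum_(i < m) \sum_(j < i) q ^+ j.
Proof.
rewrite expr2 -mulrA mulr_sumr.
under eq_bigr do rewrite -subrX1.
by rewrite sumrB sumr_const card_ord [RHS]mulrBr -subrX1 mulr_natl mulr_natr.
Qed.

Lemma coprime_expn_sub1 (k N : nat) : (0 < k)%N -> (0 < N)%N -> coprime (k ^ N - 1) k.
Proof.
move=> k_gt0 N_gt0; rewrite -(coprime_pexpr _ _ N_gt0) subn1.
by rewrite -[X in coprime _ X]prednK ?expn_gt0 ?k_gt0 // coprimenS.
Qed.

Lemma eq0_of_dvdn_expn_sub1 (k m : nat) :
  (1 < k)%N -> (forall N, (0 < N)%N -> (k ^ N - 1 %| m)%N) -> m = 0%N.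
Proof.
move=> k_gt1 dvd_m; apply/eqP; apply: contraT; rewrite -lt0n => m_gt0.
have := dvdn_leq m_gt0 (dvd_m m.+1 isT); have := ltn_expl m.+1 k_gt1; lia.
Qed.

Section ZInvK.
Variable k : nat.
Hypothesis k_gt1 : (1 < k)%N.
Local Notation K := (k%:R : rat).

(* Z[1/k] described by clearing denominators, which makes closure under the
   ring operations immediate. *)
Definition Zk (x : rat) : Prop := exists (N : nat) (m : int), x * K ^+ N = m%:~R.

Lemma K_neq0 : K != 0.
Proof. by rewrite pnatr_eq0 -lt0n ltnW. Qed.

Lemma in_ZkE x : in_Zk k x <-> Zk x.
Proof.
split=> [[a [[i|i] ->]] | [N [m xKN]]].
- by exists 0%N, (a * (k ^ i)%N%:Z); rewrite mulr1 intrM -exprnP -natrX.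
- exists i.+1, a; rewrite -mulrA mulVf ?mulr1 //.
  by rewrite expf_neq0 // K_neq0.
exists m, (- N%:Z).
by rewrite -xKN -exprnN mulrK // unitfE expf_neq0 // K_neq0.
Qed.

Lemma Zk_int (m : int) : Zk m%:~R.
Proof. by exists 0%N, m; rewrite mulr1. Qed.

Lemma Zk_expz (i : int) : Zk (K ^ i).
Proof. by apply/in_ZkE; exists 1, i; rewrite mul1r. Qed.

Lemma Zk_expzV (i : int) : Zk (K ^ i)^-1.
Proof. by rewrite invr_expz; apply: Zk_expz. Qed.

Lemma Zk_add x y : Zk x -> Zk y -> Zk (x + y).
Proof.
case=> [N [m xKN]] [M [p yKM]].
exists (N + M)%N, (m * (k ^ M)%N%:Z + p * (k ^ N)%N%:Z).
by rewrite rmorphD /= !intrM -xKN -yKM exprD -!natrX; ring.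
Qed.

Lemma Zk_mul x y : Zk x -> Zk y -> Zk (x * y).
Proof.
case=> [N [m xKN]] [M [p yKM]]; exists (N + M)%N, (m * p).
by rewrite exprD intrM -xKN -yKM; ring.
Qed.

Lemma Zk_sub x y : Zk x -> Zk y -> Zk (x - y).
Proof.
move=> Zx [N [m yKN]]; apply: Zk_add Zx _.
by exists N, (- m); rewrite mulNr yKN rmorphN.
Qed.

Lemma Zk_exprn x m : Zk x -> Zk (x ^+ m).
Proof.
move=> Zx; elim: m => [|m Zxm]; first exact: (Zk_int 1).
by rewrite exprS; apply: Zk_mul.
Qed.

Lemma Zk_expz_sub1_sub_linear q (z : int) : q != 0 -> Zk q -> Zk q^-1 ->
  exists2 P, Zk P & q ^ z - 1 - z%:~R * (q - 1) = (q - 1) ^+ 2 * P.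
Proof.
move=> q_neq0 Zq Zqinv.
have Zk_sum r m : Zk r -> Zk (\sum_(i < m) \sum_(j < i) r ^+ j).
  move=> Zr; apply: big_ind => [|x y|i _]; [exact: (Zk_int 0)|exact: Zk_add|].
  apply: big_ind => [|x y|j _]; [exact: (Zk_int 0)|exact: Zk_add|exact: Zk_exprn].
case: z => m; first by exists (\sum_(i < m) \sum_(j < i) q ^+ j);
  [exact: Zk_sum | exact: subrX1_sub_linear].
(* z < 0: apply the case z > 0 to r = q^-1, using r - 1 = - (q - 1) r. *)
set r := q^-1.
exists (r ^+ 2 * \sum_(i < m.+1) \sum_(j < i) r ^+ j + m.+1%:R * r).
  apply: Zk_add; apply: Zk_mul => //;
    [exact: Zk_exprn | exact: Zk_sum | exact: (Zk_int m.+1)].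
have -> : q ^ Negz m = r ^+ m.+1 by rewrite exprVn.
have -> : r ^+ m.+1 = (r ^+ m.+1 - 1 - m.+1%:R * (r - 1)) + 1 + m.+1%:R * (r - 1).
  by ring.
rewrite subrX1_sub_linear NegzE rmorphN /r.
by field.
Qed.

Lemma dvdn_of_Zk_dvd (b : nat) (m : int) e :
  coprime b k -> Zk e -> m%:~R = b%:R * e -> (b %| `|m|)%N.
Proof.
move=> co_bk [B [c eKB]] m_be.
have m_bc : m * (k ^ B)%N%:Z = b%:Z * c.
  by apply: (@intr_inj rat); rewrite !intrM m_be -eKB -natrX; ring.
rewrite -(Gauss_dvdl _ (coprimeXr B co_bk)).
by have := congr1 absz m_bc; rewrite !abszM !absz_nat => ->; apply: dvdn_mulr.
Qed.

Lemma Zk_eq0_of_dvd_expn_sub1 d : Zk d ->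
  (forall N, (0 < N)%N -> exists2 e, Zk e & d = (K ^+ N - 1) * e) -> d = 0.
Proof.
case=> A [m dKA] dvd_d.
suff m0 : m = 0.
  by move/eqP: dKA; rewrite m0 mulr0z mulf_eq0 expf_eq0 (negPf K_neq0) andbF orbF => /eqP.
apply/eqP; rewrite -absz_eq0; apply/eqP.
apply: (eq0_of_dvdn_expn_sub1 k_gt1) => N N_gt0.
have [e Ze de] := dvd_d N N_gt0.
apply: (dvdn_of_Zk_dvd (coprime_expn_sub1 (ltnW k_gt1) N_gt0) (Zk_mul Ze (Zk_expz A))).
by rewrite natrB ?expn_gt0 ?(ltnW k_gt1) // natrX -dKA de mulrA.
Qed.

End ZInvK.

Theorem corollary3p2 (k : nat) (hk : (1 < k)%N) (z : int) (l t : rat)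
  (hl : in_Zk k l) (ht : in_Zk k t) :
  l * z%:~R = t <->
  (forall n : int,
     congr_Zk k (l * ((k%:R : rat) ^ (n * z) - 1))
                (t * ((k%:R : rat) ^ n - 1))
                (((k%:R : rat) ^ n - 1) ^+ 2)).
Proof.
move/(in_ZkE hk): hl => Zl; move/(in_ZkE hk): ht => Zt.
have expansion (n : int) :=
  Zk_expz_sub1_sub_linear z (expfz_neq0 n (K_neq0 hk)) (Zk_expz hk n) (Zk_expzV hk n).
split=> [<- n | congr_lt].
  have [P ZP eP] := expansion n.
  exists (l * P); split; first by apply/(in_ZkE hk); apply: Zk_mul.
  by rewrite -exprz_exp -mulrA -mulrBr eP mulrCA.
apply/subr0_eq/(Zk_eq0_of_dvd_expn_sub1 hk).
  exact: Zk_sub (Zk_mul Zl (Zk_int k z)) Zt.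
move=> N N_gt0; have [c [/(in_ZkE hk) Zc ec]] := congr_lt N.
have [P ZP eP] := expansion N; rewrite -exprz_exp in ec.
exists (c - l * P); first by apply: Zk_sub => //; apply: Zk_mul.
set q : rat := k%:R ^ N in ec eP *.
have q_neq1 : q - 1 != 0 by rewrite subr_eq0 gt_eqF // exprn_egt1 -?lt0n // ltr1n.
apply: (mulfI q_neq1); rewrite -[_ ^+ N]/q.
have -> : (q - 1) * (l * z%:~R - t)
    = (l * (q ^ z - 1) - t * (q - 1)) - l * (q ^ z - 1 - z%:~R * (q - 1)) by ring.
by rewrite ec eP; ring.
Qed.
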